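(* Let $\Gamma$ be a finitely generated non-abelian free group and $\rho:\Gamma\to\mathrm{SL}_3(\mathbb{R})$ a reducible suspension preserving the hyperplane $P$. If $\rho$ is quasi-isometric, then for every $\gamma\in\Gamma\setminus\{1\}$ the element $\rho_P(\gamma)$ is hyperbolic, i.e. its two eigenvalues are real with distinct moduli.
   Context: A reducible suspension is a representation $\rho:\Gamma\to\mathrm{SL}_3(\mathbb{R})$ preserving a 2-dimensional subspace $P$; $\rho_P(\gamma):=|\det_P(\rho(\gamma))|^{-1/2}\rho(\gamma)|_P\in\mathrm{SL}^{\pm}(P)$, with $P$ given the volume form inherited from $\mathbb{R}^3$. $\rho$ is quasi-isometric if there are $a\ge1,b\ge0$ with $\log\|\rho(\gamma)\|\ge a^{-1}|\gamma|-b$ for all $\gamma$, where $|\cdot|$ is word length for a fixed finite symmetric generating set (equivalently, $\rho$ is a quasi-isometric embedding). *)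

From HB Require Import structures.
From mathcomp Require Import all_boot all_order all_algebra.
From mathcomp Require Import reals exp.
Set Implicit Arguments. Unset Strict Implicit. Unset Printing Implicit Defensive.
Import Order.TTheory GRing.Theory Num.Theory.
Local Open Scope ring_scope.

(* Elements of the free group F_k on the basis a_0,...,a_{k-1}: reduced words.
   A letter (i, true) is a_i, (i, false) is a_i^{-1}. *)
Definition letter (k : nat) := ('I_k * bool)%type.
Definition word (k : nat) := seq (letter k).

Definition reduced (k : nat) (w : word k) : bool :=
  sorted (fun x y : letter k => ~~ ((x.1 == y.1) && (x.2 != y.2))) w.

(* word length w.r.t. the symmetric generating set {a_i^{+-1}}: for a reduced
   word it is its size *)
Definition wlen (k : nat) (w : word k) : nat := size w.

Definition letter_mx (R : fieldType) (k : nat) (g : 'I_k -> 'M[R]_3)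
  (x : letter k) : 'M[R]_3 := if x.2 then g x.1 else invmx (g x.1).

Definition rep (R : fieldType) (k : nat) (g : 'I_k -> 'M[R]_3) (w : word k)
  : 'M[R]_3 := \prod_(x <- w) letter_mx g x.

Definition mxnorm (R : realFieldType) (A : 'M[R]_3) : R :=
  \big[Num.max/0]_(i < 3) \big[Num.max/0]_(j < 3) `|A i j|.

(* rho_P for a restriction matrix M of rho(gamma) to P (in some basis of P):
   |det_P|^{-1/2} rho(gamma)|_P *)
Definition normalize_P (R : rcfType) (M : 'M[R]_2) : 'M[R]_2 :=
  (Num.sqrt `|\det M|)^-1 *: M.

Definition hyperbolic (R : realFieldType) (N : 'M[R]_2) : Prop :=
  exists l1 l2 : R, `|l1| != `|l2| /\
    char_poly N = ('X - l1%:P) * ('X - l2%:P).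

(* If [rho_P(gamma)] is not hyperbolic, then [rho(gamma^2)] acts on [P] as
   [s N] with [s > 0], [det N = 1] and [|tr N| <= 2]; replacing [gamma] by its
   inverse we may assume [s <= 1]. Write [gamma = u c u^-1] with [c]
   cyclically reduced. In a basis adapted to [P], [G = rho(gamma^2)] is block
   upper triangular with diagonal blocks [s N] and [s^-2]; since the powers of
   [N] grow at most linearly (Chebyshev), the conjugates [G^t H G^-t] of
   [H = rho(u e u^-1)] have polynomially bounded entries. But for a generator
   [e] that does not cancel against [c], the word [u c^2t e c^-2t u^-1] is
   reduced of length at least [t], so quasi-isometry forces
   [log ||G^t H G^-t||] to grow linearly: a contradiction. *)

From HB Require Import structures.
From mathcomp Require Import all_boot all_order all_algebra.
From mathcomp Require Import reals exp.
From mathcomp Require Import ring lra zify.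
Import Order.TTheory GRing.Theory Num.Theory.
Local Open Scope ring_scope.
Set Implicit Arguments. Unset Strict Implicit.

Lemma ord2P (i : 'I_2) : i = 0 \/ i = 1.
Proof. by case: i => -[|[|//]] ?; [left|right]; apply/val_inj. Qed.

Lemma ord3P (i : 'I_3) : [\/ i = 0, i = 1 | i = 2].
Proof.
by case: i => -[|[|[|//]]] ?; [apply: Or31|apply: Or32|apply: Or33]; apply/val_inj.
Qed.

Section TwoByTwo.
Variable R : comNzRingType.
Implicit Types A C : 'M[R]_2.

Lemma mulmx2E A C i j : (A *m C) i j = A i 0 * C 0 j + A i 1 * C 1 j.
Proof.
rewrite mxE !big_ord_recr big_ord0 /= add0r.
by congr (A i _ * C _ j + A i _ * C _ j); apply/val_inj.
Qed.

Lemma det_mx2 A : \det A = A 0 0 * A 1 1 - A 0 1 * A 1 0.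
Proof.
rewrite (expand_det_row _ 0) !big_ord_recr big_ord0 /= add0r.
rewrite /cofactor !det_mx11 !mxE /= expr0 expr1 !mul1r mulN1r mulrN.
by congr (A _ _ * A _ _ - A _ _ * A _ _); apply/val_inj.
Qed.

Lemma mxtrace_mx2 A : \tr A = A 0 0 + A 1 1.
Proof.
by rewrite /mxtrace !big_ord_recr big_ord0 /= add0r; congr (A _ _ + A _ _); apply/val_inj.
Qed.

Lemma Cayley_Hamilton_mx2 A : A *m A = \tr A *: A - \det A *: 1%:M.
Proof.
apply/matrixP => i j; rewrite mulmx2E !mxE det_mx2 mxtrace_mx2.
by case: (ord2P i) => ->; case: (ord2P j) => ->; rewrite /= ?mulr1 ?mulr0; ring.
Qed.

Lemma char_poly_mx2 A : char_poly A = 'X^2 - (\tr A)%:P * 'X + (\det A)%:P.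
Proof.
apply/polyP => i; rewrite !coefD !coefN coefXn coefCM coefX coefC.
case: i => [|[|[|i]]] /=.
- by rewrite char_poly_det; ring.
- by rewrite (char_poly_trace A) //=; ring.
- have /monicP := char_poly_monic A.
  by rewrite /lead_coef size_char_poly /= => ->; ring.
- by rewrite nth_default ?size_char_poly //; ring.
Qed.

End TwoByTwo.

Lemma hyperbolic_disc_gt0 (R : rcfType) (N : 'M[R]_2) :
  \tr N != 0 -> 0 < (\tr N) ^+ 2 - 4 * \det N -> hyperbolic N.
Proof.
move=> t0 disc; set t := \tr N in t0 disc *; set r := Num.sqrt (t ^+ 2 - 4 * \det N).
have r0 : 0 < r by rewrite sqrtr_gt0.
have rr : r ^+ 2 = t ^+ 2 - 4 * \det N by rewrite sqr_sqrtr // ltW.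
exists ((t + r) / 2), ((t - r) / 2); split.
  apply: contraNneq (mulf_neq0 t0 (lt0r_neq0 r0)) => e.
  have e2 : ((t + r) / 2) ^+ 2 = ((t - r) / 2) ^+ 2.
    by rewrite -(real_normK (num_real _)) e real_normK ?num_real.
  have -> : t * r = ((t + r) / 2) ^+ 2 - ((t - r) / 2) ^+ 2 by field.
  by rewrite e2 subrr.
have eD : \det N = (t + r) / 2 * ((t - r) / 2).
  apply: (mulfI (x := 4)); first by rewrite pnatr_eq0.
  have -> : 4 * ((t + r) / 2 * ((t - r) / 2)) = t ^+ 2 - r ^+ 2 by field.
  by rewrite rr; ring.
have eT : t = (t + r) / 2 + (t - r) / 2 by field.
rewrite char_poly_mx2 -/t {1}eT eD polyCD polyCM; ring.
Qed.

Lemma normalize_P_hyperbolic (R : rcfType) (M : 'M[R]_2) :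
  \det M != 0 -> 0 < (\tr M) ^+ 2 * ((\tr M) ^+ 2 - 4 * \det M) ->
  hyperbolic (normalize_P M).
Proof.
move=> d0 pos; set t := \tr M in pos *; set d := \det M in d0 pos *.
set s := Num.sqrt `|d|.
have s0 : 0 < s by rewrite sqrtr_gt0 normr_gt0.
have t0 : t != 0 by apply: contraTneq pos => ->; rewrite expr0n mul0r ltxx.
have trN : \tr (normalize_P M) = t / s by rewrite /normalize_P mxtraceZ mulrC.
have detN : \det (normalize_P M) = d / s ^+ 2.
  by rewrite /normalize_P detZ exprVn mulrC.
apply: hyperbolic_disc_gt0; rewrite trN ?detN.
  by rewrite mulf_neq0 // invr_eq0 gt_eqF.
have -> : (t / s) ^+ 2 - 4 * (d / s ^+ 2) = (t ^+ 2 - 4 * d) / s ^+ 2.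
  by field; rewrite gt_eqF.
have t2 : 0 < t ^+ 2 by rewrite exprn_even_gt0 ?t0 ?orbT.
by rewrite divr_gt0 ?exprn_gt0 // -(pmulr_rgt0 _ t2).
Qed.

Section Bounds.
Variable R : realFieldType.

Definition mx_bounded m n (X : 'M[R]_(m, n)) (c : R) := forall i j, `|X i j| <= c.

Lemma mx_bounded_le m n (X : 'M[R]_(m, n)) c c' :
  mx_bounded X c -> c <= c' -> mx_bounded X c'.
Proof. by move=> h hc i j; apply: le_trans (h i j) hc. Qed.

Lemma mx_boundedD m n (X Y : 'M[R]_(m, n)) a b :
  mx_bounded X a -> mx_bounded Y b -> mx_bounded (X + Y) (a + b).
Proof. by move=> hx hy i j; rewrite mxE (le_trans (ler_normD _ _)) // lerD. Qed.

Lemma mx_boundedN m n (X : 'M[R]_(m, n)) a : mx_bounded X a -> mx_bounded (- X) a.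
Proof. by move=> hx i j; rewrite mxE normrN. Qed.

Lemma mx_boundedZ m n (X : 'M[R]_(m, n)) a k :
  mx_bounded X a -> mx_bounded (k *: X) (`|k| * a).
Proof. by move=> hx i j; rewrite mxE normrM ler_wpM2l. Qed.

Lemma mx_boundedZ_le1 m n (X : 'M[R]_(m, n)) a k :
  mx_bounded X a -> `|k| <= 1 -> mx_bounded (k *: X) a.
Proof.
move=> hx hk i j; rewrite mxE normrM.
by rewrite -[a]mul1r ler_pM // (le_trans _ (hx i j)).
Qed.

Lemma mx_bounded1 n : mx_bounded (1%:M : 'M[R]_n) 1.
Proof. by move=> i j; rewrite mxE; case: (i == j); rewrite ?normr1 ?normr0. Qed.

Lemma mx_boundedM m p n (X : 'M[R]_(m, p)) (Y : 'M[R]_(p, n)) a b :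
  mx_bounded X a -> mx_bounded Y b -> mx_bounded (X *m Y) (p%:R * (a * b)).
Proof.
move=> hx hy i j; rewrite mxE (le_trans (ler_norm_sum _ _ _)) //.
rewrite (le_trans (ler_sum (G := fun _ => a * b) _ _)) //.
  by move=> k _; rewrite normrM ler_pM.
by rewrite sumr_const card_ord mulr_natl.
Qed.

Lemma mx_bounded_sum m n p (F : 'I_p -> 'M[R]_(m, n)) c :
  (forall i, mx_bounded (F i) c) -> mx_bounded (\sum_(i < p) F i) (p%:R * c).
Proof.
move=> h i j; rewrite summxE (le_trans (ler_norm_sum _ _ _)) //.
rewrite (le_trans (ler_sum (G := fun _ => c) _ _)) //.
  by move=> k _; apply: h.
by rewrite sumr_const card_ord mulr_natl.
Qed.

Lemma mx_bounded_block m1 m2 n1 n2 (A : 'M[R]_(m1, n1)) (B : 'M[R]_(m1, n2))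
   (C : 'M[R]_(m2, n1)) (D : 'M[R]_(m2, n2)) c :
  mx_bounded A c -> mx_bounded B c -> mx_bounded C c -> mx_bounded D c ->
  mx_bounded (block_mx A B C D) c.
Proof.
move=> hA hB hC hD i j.
rewrite -(splitK i) -(splitK j); case: (split i) => i'; case: (split j) => j' /=.
- by rewrite block_mxEul.
- by rewrite block_mxEur.
- by rewrite block_mxEdl.
- by rewrite block_mxEdr.
Qed.

Definition sum_abs m n (X : 'M[R]_(m, n)) : R := \sum_i \sum_j `|X i j|.

Lemma sum_abs_ge0 m n (X : 'M[R]_(m, n)) : 0 <= sum_abs X.
Proof. by apply: sumr_ge0 => i _; apply: sumr_ge0. Qed.

Lemma mx_bounded_sum_abs m n (X : 'M[R]_(m, n)) : mx_bounded X (sum_abs X).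
Proof.
move=> i j; rewrite /sum_abs (bigD1 i) //= (bigD1 j) //= -addrA lerDl.
by rewrite addr_ge0 //; apply: sumr_ge0 => *; [|apply: sumr_ge0].
Qed.

Definition poly_bounded m n (f : nat -> 'M[R]_(m, n)) :=
  exists (C : R) (d : nat), 0 <= C /\ forall t, mx_bounded (f t) (C * t.+1%:R ^+ d).

Lemma poly_weight_le (C C' : R) (d d' t : nat) : 0 <= C -> C <= C' -> (d <= d')%N ->
  C * t.+1%:R ^+ d <= C' * t.+1%:R ^+ d'.
Proof.
move=> C0 CC dd; apply: ler_pM => //; first exact: exprn_ge0.
by apply: ler_weXn2l => //; rewrite ler1n.
Qed.

Lemma eq_poly_bounded m n (f g : nat -> 'M[R]_(m, n)) :
  f =1 g -> poly_bounded f -> poly_bounded g.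
Proof. by move=> e [C [d [C0 h]]]; exists C, d; split => // t; rewrite -e. Qed.

Lemma poly_bounded_cst m n (X : 'M[R]_(m, n)) : poly_bounded (fun _ => X).
Proof.
exists (sum_abs X), 0%N; split => [|t]; first exact: sum_abs_ge0.
by rewrite expr0 mulr1; apply: mx_bounded_sum_abs.
Qed.

Lemma poly_boundedD m n (f g : nat -> 'M[R]_(m, n)) :
  poly_bounded f -> poly_bounded g -> poly_bounded (fun t => f t + g t).
Proof.
move=> [C1 [d1 [C10 h1]]] [C2 [d2 [C20 h2]]].
exists (C1 + C2 + (C1 + C2)), (d1 + d2)%N; split; first by lra.
move=> t; apply: (mx_bounded_le (mx_boundedD (h1 t) (h2 t))).
by rewrite mulrDl; apply: lerD; apply: poly_weight_le => //; lia || lra.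
Qed.

Lemma poly_boundedN m n (f : nat -> 'M[R]_(m, n)) :
  poly_bounded f -> poly_bounded (fun t => - f t).
Proof. by move=> [C [d [C0 h]]]; exists C, d; split => // t; apply: mx_boundedN. Qed.

Lemma poly_boundedZ m n (f : nat -> 'M[R]_(m, n)) (c : nat -> R) :
  poly_bounded f -> (forall t, `|c t| <= 1) -> poly_bounded (fun t => c t *: f t).
Proof.
by move=> [C [d [C0 h]]] hc; exists C, d; split => // t; apply: mx_boundedZ_le1.
Qed.

Lemma poly_boundedM m p n (f : nat -> 'M[R]_(m, p)) (g : nat -> 'M[R]_(p, n)) :
  poly_bounded f -> poly_bounded g -> poly_bounded (fun t => f t *m g t).
Proof.
move=> [C1 [d1 [C10 h1]]] [C2 [d2 [C20 h2]]].
exists (p%:R * (C1 * C2)), (d1 + d2)%N; split; first by rewrite !mulr_ge0.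
move=> t; apply: (mx_bounded_le (mx_boundedM (h1 t) (h2 t))).
by rewrite exprD le_eqVlt; apply/orP; left; apply/eqP; ring.
Qed.

Lemma poly_bounded_shift m n (f : nat -> 'M[R]_(m, n)) :
  poly_bounded f -> poly_bounded (fun t => f t.+1).
Proof.
move=> [C [d [C0 h]]]; exists (C * 2%:R ^+ d), d; split.
  by rewrite mulr_ge0 // exprn_ge0.
move=> t; apply: (mx_bounded_le (h t.+1)).
rewrite -mulrA; apply: ler_wpM2l => //; rewrite -exprMn.
by apply: lerXn2r; rewrite ?nnegrE ?mulr_ge0 // -natrM ler_nat; lia.
Qed.

Lemma poly_bounded_block m1 m2 n1 n2 (A : nat -> 'M[R]_(m1, n1))
   (B : nat -> 'M[R]_(m1, n2)) (C : nat -> 'M[R]_(m2, n1)) (D : nat -> 'M[R]_(m2, n2)) :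
  poly_bounded A -> poly_bounded B -> poly_bounded C -> poly_bounded D ->
  poly_bounded (fun t => block_mx (A t) (B t) (C t) (D t)).
Proof.
move=> [C1 [d1 [C10 h1]]] [C2 [d2 [C20 h2]]] [C3 [d3 [C30 h3]]] [C4 [d4 [C40 h4]]].
exists (C1 + C2 + C3 + C4), (d1 + d2 + d3 + d4)%N; split; first by lra.
by move=> t; apply: mx_bounded_block;
  [apply: mx_bounded_le (h1 t) _ | apply: mx_bounded_le (h2 t) _
  | apply: mx_bounded_le (h3 t) _ | apply: mx_bounded_le (h4 t) _];
  apply: poly_weight_le => //; lia || lra.
Qed.

Lemma poly_bounded_sum m n (g : nat -> 'M[R]_(m, n)) (c : nat -> nat -> R) :
  poly_bounded g -> (forall t i, `|c t i| <= 1) ->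
  poly_bounded (fun t => \sum_(i < t) c t i *: g i).
Proof.
move=> [C [d [C0 h]]] hc; exists C, d.+1; split => // t.
apply: (mx_bounded_le (mx_bounded_sum (c := C * t.+1%:R ^+ d) _)).
  move=> i; apply: mx_boundedZ_le1 => //; apply: (mx_bounded_le (h i)).
  apply: ler_wpM2l => //; apply: lerXn2r; rewrite ?nnegrE ?ler0n //.
  by rewrite ler_nat ltnS ltnW.
rewrite exprS mulrCA; apply: ler_wpM2l => //.
by apply: ler_wpM2r; rewrite ?exprn_ge0 ?ler_nat.
Qed.

(* [cheb n] is [U_(n-1)(tau/2)], with [U_k] the Chebyshev polynomials of the
   second kind. *)
Fixpoint cheb (tau : R) n :=
  if n is m.+1 then (if m is l.+1 then tau * cheb tau m - cheb tau l else 1) else 0.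

Lemma chebS tau n : cheb tau n.+2 = tau * cheb tau n.+1 - cheb tau n.
Proof. by []. Qed.

Lemma cheb_quadratic tau n :
  cheb tau n.+1 ^+ 2 - tau * cheb tau n.+1 * cheb tau n + cheb tau n ^+ 2 = 1.
Proof. by elim: n => [|n IH]; rewrite ?chebS -?IH /=; ring. Qed.

(* For [|tau| <= 2] the quadratic form of [cheb_quadratic] is positive
   semidefinite, which keeps [cheb tau n.+1 - tau / 2 * cheb tau n] in [[-1, 1]]. *)
Lemma cheb_bound tau n : `|tau| <= 2 -> `|cheb tau n| <= n%:R.
Proof.
move=> htau; elim: n => [|n IH]; first by rewrite normr0.
have inv := cheb_quadratic tau n.
set x := cheb tau n.+1 in inv *; set y := cheb tau n in inv IH *.
have /andP[ht1 ht2] : -2 <= tau <= 2 by rewrite -ler_norml.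
set z := x - tau / 2 * y.
have hz2 : z ^+ 2 <= 1.
  have -> : z ^+ 2 = (x ^+ 2 - tau * x * y + y ^+ 2) - (1 - tau ^+ 2 / 4) * y ^+ 2.
    by rewrite /z; field.
  suff : 0 <= (1 - tau ^+ 2 / 4) * y ^+ 2 by rewrite inv; lra.
  by rewrite mulr_ge0 ?sqr_ge0 // subr_ge0 ler_pdivrMr //; nra.
have /andP[hz1 hz1'] : -1 <= z <= 1 by apply/andP; split; nra.
have /andP[hty hty'] : -(2 * `|y|) <= tau * y <= 2 * `|y|.
  by rewrite -ler_norml normrM ler_wpM2r.
have hx : x = z + tau * y / 2 by rewrite /z; field.
by rewrite -natr1 ler_norml hx; apply/andP; split; lra.
Qed.

Lemma exp_cheb tau (N : 'M[R]_2) n : N *m N = tau *: N - 1%:M ->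
  N ^+ n.+1 = cheb tau n.+1 *: N - cheb tau n *: 1%:M.
Proof.
move=> hN; elim: n => [|n IH]; first by rewrite expr1 /= scale1r scale0r subr0.
rewrite exprSr IH mulrBl -!scalerAl mul1r -mulmxE hN chebS.
by apply/matrixP => i j; rewrite !mxE; ring.
Qed.

Lemma poly_bounded_exp_mx2 (N : 'M[R]_2) :
  \det N = 1 -> `|\tr N| <= 2 -> poly_bounded (fun t => N ^+ t).
Proof.
move=> hdet htau; have hN := Cayley_Hamilton_mx2 N; rewrite hdet scale1r in hN.
exists (sum_abs N + 1), 1%N; split => [|[|n]].
- by rewrite addr_ge0 // sum_abs_ge0.
- rewrite expr0; apply: (@mx_bounded_le _ _ 1%:M 1); first exact: mx_bounded1.
  by rewrite expr1 mulr1 lerDr sum_abs_ge0.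
rewrite (exp_cheb n hN).
apply: (mx_bounded_le (c := `|cheb (\tr N) n.+1| * sum_abs N + `|cheb (\tr N) n| * 1)).
  apply: mx_boundedD; first exact: mx_boundedZ (mx_bounded_sum_abs N).
  exact/mx_boundedN/mx_boundedZ/mx_bounded1.
have h1 := cheb_bound n.+1 htau; have h2 := cheb_bound n htau.
have m0 := sum_abs_ge0 N.
have : `|cheb (\tr N) n.+1| * sum_abs N <= n.+1%:R * sum_abs N by rewrite ler_wpM2r.
by rewrite expr1 mulr1 -!natr1 in h1 h2 *; nra.
Qed.

End Bounds.

Section Unimodular.
Variables (R : comUnitRingType) (N : 'M[R]_2).
Hypothesis detN : \det N = 1.

Lemma mulmx_adj_unimodular : N *m \adj N = 1%:M.
Proof. by rewrite mul_mx_adj detN. Qed.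

Lemma adj_mx2 : \adj N = \tr N *: 1%:M - N.
Proof.
have := congr1 (mulmx (\adj N)) (Cayley_Hamilton_mx2 N).
rewrite detN scale1r mulmxA mul_adj_mx detN mul1mx mulmxBr -scalemxAr mul_adj_mx.
by rewrite detN mulmx1 => e; rewrite {3}e opprB addrC subrK.
Qed.

Lemma det_adj_mx2 : \det (\adj N) = 1.
Proof.
by have := congr1 determinant mulmx_adj_unimodular; rewrite det_mulmx detN mul1r det1.
Qed.

Lemma mxtrace_adj_mx2 : \tr (\adj N) = \tr N.
Proof. by rewrite adj_mx2 raddfB /= mxtraceZ mxtrace1 mulr_natr mulr2n addrK. Qed.

End Unimodular.

Lemma mulmx3E (R : pzRingType) m n (X : 'M[R]_(m, 3)) (Y : 'M[R]_(3, n)) i j :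
  (X *m Y) i j = X i 0 * Y 0 j + X i 1 * Y 1 j + X i 2 * Y 2 j.
Proof.
rewrite mxE !big_ord_recr big_ord0 /= add0r.
by congr (X i _ * Y _ j + X i _ * Y _ j + X i _ * Y _ j); apply/val_inj.
Qed.

Definition cross (R : pzRingType) (u v : 'cV[R]_3) : 'cV[R]_3 := \col_j
  if j == 0 then u 1 0 * v 2 0 - u 2 0 * v 1 0
  else if j == 1 then u 2 0 * v 0 0 - u 0 0 * v 2 0
  else u 0 0 * v 1 0 - u 1 0 * v 0 0.

Section Complement.
Variables (R : realFieldType) (B : 'M[R]_(3, 2)).
Hypothesis rankB : \rank B = 2%N.

Let n := cross (col 0 B) (col 1 B).
Let nn := n 0 0 ^+ 2 + n 1 0 ^+ 2 + n 2 0 ^+ 2.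

(* A left inverse [L] of [B] gives [1 = \det (L *m B)], and by Cauchy-Binet
   this determinant is a combination of the entries of [n]. *)
Lemma cross_col_neq0 : nn != 0.
Proof.
have [L hL] : exists L : 'M[R]_(2, 3), L *m B = 1%:M.
  have /row_freeP[C hC] : row_free B^T by rewrite /row_free mxrank_tr rankB.
  by exists C^T; rewrite -[B]trmxK -trmx_mul hC trmx1.
have /eqP := congr1 determinant hL; rewrite det1 det_mx2 !mulmx3E.
apply: contraTneq; rewrite /nn => /eqP hnn.
have [n0 n1 n2] : [/\ n 0 0 = 0, n 1 0 = 0 & n 2 0 = 0] by split; nra.
move: n0 n1 n2; rewrite !mxE /= => n0 n1 n2.
have -> : (L 0 0 * B 0 0 + L 0 1 * B 1 0 + L 0 2 * B 2 0) *
  (L 1 0 * B 0 1 + L 1 1 * B 1 1 + L 1 2 * B 2 1) -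
  (L 0 0 * B 0 1 + L 0 1 * B 1 1 + L 0 2 * B 2 1) *
  (L 1 0 * B 0 0 + L 1 1 * B 1 0 + L 1 2 * B 2 0) =
  (L 0 0 * L 1 1 - L 0 1 * L 1 0) * (B 0 0 * B 1 1 - B 1 0 * B 0 1)
  - (L 0 0 * L 1 2 - L 0 2 * L 1 0) * (B 2 0 * B 0 1 - B 0 0 * B 2 1)
  + (L 0 1 * L 1 2 - L 0 2 * L 1 1) * (B 1 0 * B 2 1 - B 2 0 * B 1 1) by ring.
by rewrite n0 n1 n2 !mulr0 subrr addr0 eq_sym oner_eq0.
Qed.

(* The rows of [Qi] are the dual basis of [col 0 B], [col 1 B], [n]. *)
Lemma rank2_complement :
  exists (v : 'cV[R]_3) (Qi : 'M[R]_(2 + 1, 3)), Qi *m row_mx B v = 1%:M.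
Proof.
exists n, (\matrix_(i < 2 + 1, j < 3)
  ((if (i : nat) == 0%N then cross (col 1 B) n j 0
    else if (i : nat) == 1%N then cross n (col 0 B) j 0 else n j 0) / nn)).
have := cross_col_neq0; rewrite /nn !mxE /= => hnn.
apply/matrixP => i j; rewrite mulmx3E -(splitK j); case: (split j) => j' /=.
- rewrite !row_mxEl.
  by case: (ord3P i) => ->; case: (ord2P j') => ->; rewrite !mxE /=; field.
- rewrite !row_mxEr (_ : j' = 0); last by apply/val_inj; case: j' => -[].
  by case: (ord3P i) => ->; rewrite !mxE /=; field.
Qed.

End Complement.

Lemma mulmx1_exp (R : pzRingType) n (A A' : 'M[R]_n) t :
  A *m A' = 1%:M -> A ^+ t *m A' ^+ t = 1%:M.
Proof.
move=> h; elim: t => [|t IH]; first by rewrite !expr0 mulmx1.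
by rewrite exprSr exprS -!mulmxE mulmxA -[A ^+ t *m A *m A']mulmxA h mulmx1 IH.
Qed.

Lemma conjmx_exp (R : comUnitRingType) n (U Ui Z : 'M[R]_n) t :
  Ui *m U = 1%:M -> (U *m Z *m Ui) ^+ t = U *m Z ^+ t *m Ui.
Proof.
move=> h; elim: t => [|t IH]; first by rewrite !expr0 mulmx1 (mulmx1C h).
rewrite exprS IH -mulmxE exprS -mulmxE !mulmxA.
by rewrite -[U *m Z *m Ui *m U]mulmxA h mulmx1.
Qed.

Section BlockTriangular.
Variables (R : realFieldType) (B : 'M[R]_(3, 2)) (v : 'cV[R]_3) (Qi : 'M[R]_(2 + 1, 3)).
Hypothesis QiQ : Qi *m row_mx B v = 1%:M.

Let Q := row_mx B v.

Lemma frame_mulV : Q *m Qi = 1%:M.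
Proof. exact: mulmx1C QiQ. Qed.

Lemma frame_conj_block (G : 'M[R]_3) (A : 'M[R]_2) : G *m B = B *m A ->
  Qi *m G *m Q = block_mx A (usubmx (Qi *m (G *m v))) 0 (dsubmx (Qi *m (G *m v))).
Proof.
have [QiB _] : Qi *m B = col_mx 1%:M 0 /\ Qi *m v = col_mx 0 1%:M.
  by move: QiQ; rewrite mul_mx_row (scalar_mx_block 2 1) block_mxEh => /eq_row_mx.
move=> hG; rewrite /Q -mulmxA mul_mx_row hG mul_mx_row mulmxA QiB.
by rewrite mul_col_mx mul1mx mul0mx block_mxEh vsubmxK.
Qed.

Lemma frame_conj_exp (G : 'M[R]_3) t : (Qi *m G *m Q) ^+ t = Qi *m G ^+ t *m Q.
Proof. exact: conjmx_exp frame_mulV. Qed.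

Lemma frame_det_restriction (G : 'M[R]_3) (A : 'M[R]_2) :
  G *m B = B *m A -> \det G = 1 -> \det A != 0.
Proof.
move=> hG hd; have /(congr1 determinant) := frame_conj_block hG.
rewrite det_ublock !det_mulmx hd mulr1 -det_mulmx QiQ det1.
by move=> e; apply/eqP => a0; move: e; rewrite a0 mul0r => /eqP; rewrite oner_eq0.
Qed.

Section Growth.
Variables (G Gi H : 'M[R]_3) (s : R) (N X : 'M[R]_2).
Hypotheses (GiG : Gi *m G = 1%:M) (detG : \det G = 1).
Hypotheses (GB : G *m B = B *m (s *: N)) (HB : H *m B = B *m X).
Hypotheses (s_gt0 : 0 < s) (s_le1 : s <= 1).
Hypotheses (detN : \det N = 1) (trN : `|\tr N| <= 2).

Let w := usubmx (Qi *m (G *m v)).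
Let T := Qi *m G *m Q.
Let l := (s ^+ 2)^-1.

Lemma frame_conj_corner : dsubmx (Qi *m (G *m v)) = l%:M.
Proof.
have : \det T = 1 by rewrite !det_mulmx detG mulr1 -det_mulmx QiQ det1.
rewrite /T (frame_conj_block GB) det_ublock detZ detN mulr1 det_mx11 => e.
rewrite [LHS]mx11_scalar /l; congr (_ %:M).
have s2 : s ^+ 2 != 0 by rewrite expf_neq0 // gt_eqF.
by apply: (mulfI s2); rewrite e mulfV.
Qed.

Definition drift t : 'cV[R]_2 :=
  \sum_(i < t) (s ^+ i * (s ^+ 2) ^+ i.+1) *: (N ^+ i *m w).

Lemma frame_conj_exp_block t :
  T ^+ t = block_mx (s ^+ t *: N ^+ t) (l ^+ t *: drift t) 0 ((l ^+ t)%:M).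
Proof.
elim: t => [|t IH].
  by rewrite !expr0 scale1r /drift big_ord0 scaler0 -scalar_mx_block.
rewrite exprSr IH -mulmxE /T (frame_conj_block GB) frame_conj_corner.
rewrite mulmx_block !mulmx0 !mul0mx !addr0 !add0r mul_mx_scalar -scalar_mxM -!exprSr.
congr block_mx; first by rewrite -scalemxAl -scalemxAr scalerA !exprSr mulmxE.
rewrite /drift big_ord_recr /= scalerDr scalerA -exprS [RHS]addrC; congr (_ + _).
rewrite -scalemxAl scalerA; congr (_ *: _).
have s2 : (s ^+ 2) ^+ t.+1 != 0 by rewrite !expf_neq0 // gt_eqF.
by rewrite /l exprVn mulrCA mulVf ?mulr1.
Qed.

Lemma exp_mulV_s t : s ^+ t * (s^-1) ^+ t = 1.
Proof. by rewrite exprVn mulfV // expf_neq0 // gt_eqF. Qed.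

Lemma exp_mulV_l t : l ^+ t * (l^-1) ^+ t = 1.
Proof. by rewrite exprVn mulfV // expf_neq0 // /l invr_eq0 expf_neq0 // gt_eqF. Qed.

Let Ti := Qi *m Gi *m Q.

Lemma frame_conjV_exp_block t : Ti ^+ t = block_mx ((s^-1) ^+ t *: \adj N ^+ t)
  (- ((s^-1) ^+ t *: (\adj N ^+ t *m drift t))) 0 (((l^-1) ^+ t)%:M).
Proof.
have TiT : Ti *m T = 1%:M.
  rewrite /Ti /T !mulmxA -[Qi *m Gi *m Q *m Qi]mulmxA frame_mulV mulmx1.
  by rewrite -[Qi *m Gi *m G]mulmxA GiG mulmx1 QiQ.
set Y := block_mx _ _ _ _.
suff TY : T ^+ t *m Y = 1%:M.
  by rewrite -[Ti ^+ t]mulmx1 -TY mulmxA (mulmx1_exp t TiT) mul1mx.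
have NN' := mulmx_adj_unimodular detN.
rewrite frame_conj_exp_block /Y mulmx_block !mulmx0 !mul0mx !addr0 !add0r.
rewrite (scalar_mx_block 2 1) -scalar_mxM exp_mulV_l.
congr block_mx.
- by rewrite -scalemxAl -scalemxAr scalerA exp_mulV_s scale1r mulmx1_exp.
- rewrite mulmxN -scalemxAl -scalemxAr scalerA exp_mulV_s scale1r mulmxA mulmx1_exp //.
  by rewrite mul1mx mul_mx_scalar scalerA mulrC exp_mulV_l scale1r addNr.
Qed.

Let y := usubmx (Qi *m (H *m v)).
Let z := dsubmx (Qi *m (H *m v)).

Lemma frame_conj_conj_exp t : T ^+ t *m (Qi *m H *m Q) *m Ti ^+ t =
  block_mx (N ^+ t *m X *m \adj N ^+ t)
    (- (N ^+ t *m X *m \adj N ^+ t *m drift t)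
     + (s ^+ t * (l^-1) ^+ t) *: (N ^+ t *m y) + drift t *m z)
    0 z.
Proof.
rewrite frame_conj_exp_block frame_conjV_exp_block (frame_conj_block HB).
rewrite !mulmx_block !mulmx0 !mul0mx !addr0 !add0r.
have linv : (l^-1) ^+ t * l ^+ t = 1 by rewrite mulrC exp_mulV_l.
congr block_mx.
- by rewrite -!scalemxAl -scalemxAr scalerA exp_mulV_s scale1r.
- rewrite mulmxN -!scalemxAl -scalemxAr scalerA exp_mulV_s scale1r.
  rewrite [_ *m (\adj N ^+ t *m drift t)]mulmxA.
  rewrite mul_mx_scalar scalerDr !scalerA linv scale1r addrA.
  by rewrite [(l^-1) ^+ t * _]mulrC.
- by rewrite mul0mx.
- by rewrite mul0mx add0r mul_scalar_mx mul_mx_scalar scalerA linv scale1r.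
Qed.

Lemma exp_s_le1 t i : `|s ^+ i * (s ^+ 2) ^+ t| <= 1.
Proof.
have s0 : 0 <= s by apply: ltW.
have s2 : s ^+ 2 <= 1 by apply: exprn_ile1.
rewrite ger0_norm ?mulr_ge0 ?exprn_ge0 //.
by apply: mulr_ile1; rewrite ?exprn_ge0 // exprn_ile1 // exprn_ge0.
Qed.

Lemma poly_bounded_drift : poly_bounded drift.
Proof.
apply: (poly_bounded_sum (g := fun i => N ^+ i *m w)
                         (c := fun _ i => s ^+ i * (s ^+ 2) ^+ i.+1)) => [|t i].
  exact: poly_boundedM (poly_bounded_exp_mx2 detN trN) (poly_bounded_cst w).
exact: exp_s_le1.
Qed.

Lemma poly_bounded_conj_exp : poly_bounded (fun t => G ^+ t *m H *m Gi ^+ t).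
Proof.
have QK : forall Z : 'M[R]_3, Q *m (Qi *m Z) = Z.
  by move=> Z; rewrite mulmxA frame_mulV mul1mx.
apply: (@eq_poly_bounded _ _ _ (fun t => Q *m (T ^+ t *m (Qi *m H *m Q) *m Ti ^+ t) *m Qi)).
  by move=> t; rewrite /T /Ti !frame_conj_exp -!mulmxA !QK frame_mulV mulmx1.
apply/poly_boundedM/poly_bounded_cst/poly_boundedM; first exact: poly_bounded_cst.
apply: eq_poly_bounded (fun t => esym (frame_conj_conj_exp t)) _.
have PN := poly_bounded_exp_mx2 detN trN.
have PN' : poly_bounded (fun t => \adj N ^+ t).
  by apply: poly_bounded_exp_mx2; rewrite ?det_adj_mx2 ?mxtrace_adj_mx2.
have PNXN := poly_boundedM (poly_boundedM PN (poly_bounded_cst X)) PN'.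
apply: poly_bounded_block => //; try exact: poly_bounded_cst.
apply: poly_boundedD (poly_boundedM poly_bounded_drift (poly_bounded_cst z)).
apply: poly_boundedD (poly_boundedN (poly_boundedM PNXN poly_bounded_drift)) _.
apply: poly_boundedZ (poly_boundedM PN (poly_bounded_cst y)) _ => t.
by rewrite /l invrK exp_s_le1.
Qed.

End Growth.
End BlockTriangular.

Lemma contracting_conj_poly_bounded (R : realFieldType) (B : 'M[R]_(3, 2))
    (G Gi H : 'M[R]_3) (s : R) (N X : 'M[R]_2) :
  \rank B = 2%N -> Gi *m G = 1%:M -> \det G = 1 ->
  G *m B = B *m (s *: N) -> H *m B = B *m X -> 0 < s -> s <= 1 ->
  \det N = 1 -> `|\tr N| <= 2 -> poly_bounded (fun t => G ^+ t *m H *m Gi ^+ t).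
Proof.
move=> rk GiG dG GB HB s0 s1 dN tN; have [v [Qi QiQ]] := rank2_complement rk.
exact: (poly_bounded_conj_exp QiQ GiG dG GB HB s0 s1 dN tN).
Qed.

Lemma det_restriction_neq0 (R : realFieldType) (B : 'M[R]_(3, 2)) (G : 'M[R]_3)
    (A : 'M[R]_2) :
  \rank B = 2%N -> G *m B = B *m A -> \det G = 1 -> \det A != 0.
Proof.
move=> rk GB dG; have [v [Qi QiQ]] := rank2_complement rk.
exact: (frame_det_restriction QiQ GB dG).
Qed.

Section Words.
Variable k : nat.
Implicit Types (a b c u : word k) (x y : letter k).

Definition nocancel x y : bool := ~~ ((x.1 == y.1) && (x.2 != y.2)).
Definition letter_inv x : letter k := (x.1, ~~ x.2).
Definition word_inv a : word k := rev (map letter_inv a).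
Definition word_exp c n : word k := flatten (nseq n c).
Definition olast a := ohead (rev a).

Definition joinable a b : bool :=
  if (olast a, ohead b) is (Some x, Some y) then nocancel x y else true.

Definition cyclically_reduced c := reduced c && joinable c c.

Lemma letter_invK : involutive letter_inv.
Proof. by case=> i b; rewrite /letter_inv /= negbK. Qed.

Lemma nocancelC x y : nocancel x y = nocancel y x.
Proof. by case: x y => i a [j b]; rewrite /nocancel /= eq_sym; case: a; case: b. Qed.

Lemma nocancel_inv x y : nocancel (letter_inv x) (letter_inv y) = nocancel x y.
Proof. by case: x y => i a [j b]; rewrite /nocancel /=; case: a; case: b. Qed.

Lemma nocancelxx x : nocancel x x.
Proof. by rewrite /nocancel !eqxx. Qed.

Lemma word_invK : involutive word_inv.
Proof.
by move=> a; rewrite /word_inv map_rev revK -map_comp (eq_map letter_invK) map_id.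
Qed.

Lemma word_inv_cat a b : word_inv (a ++ b) = word_inv b ++ word_inv a.
Proof. by rewrite /word_inv map_cat rev_cat. Qed.

Lemma word_inv_cons x a : word_inv (x :: a) = word_inv a ++ [:: letter_inv x].
Proof. by rewrite /word_inv /= rev_cons cats1. Qed.

Lemma word_inv_eq0 a : (word_inv a == [::]) = (a == [::]).
Proof. by case: a => // x a; rewrite word_inv_cons; case: (word_inv a). Qed.

Lemma olast_cons x a : olast (x :: a) = Some (last x a).
Proof.
by rewrite /olast rev_cons; case/lastP: a => [|a z] //=; rewrite last_rcons rev_rcons.
Qed.

Lemma ohead_cat a b : ohead (a ++ b) = if a is [::] then ohead b else ohead a.
Proof. by case: a. Qed.

Lemma olast_cat a b : olast (a ++ b) = if b is [::] then olast a else olast b.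
Proof. by case: b => [|y b]; rewrite ?cats0 // /olast rev_cat rev_cons; case: (rev b). Qed.

Lemma ohead_word_inv a : ohead (word_inv a) = omap letter_inv (olast a).
Proof. by rewrite /word_inv /olast -map_rev; case: (rev a). Qed.

Lemma olast_word_inv a : olast (word_inv a) = omap letter_inv (ohead a).
Proof. by rewrite /word_inv /olast revK; case: a. Qed.

Lemma reduced_cat a b : reduced (a ++ b) = [&& reduced a, joinable a b & reduced b].
Proof.
case: a => [|x a]; first by rewrite /joinable /=; case: (ohead b).
case: b => [|y b]; first by rewrite cats0 /joinable olast_cons /= andbT.
by rewrite /reduced /= cat_path /joinable olast_cons /= andbA.
Qed.

Lemma joinable_catr a b c : b != [::] -> joinable a (b ++ c) = joinable a b.
Proof. by case: b. Qed.

Lemma joinable_word_inv a b : joinable (word_inv b) (word_inv a) = joinable a b.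
Proof.
rewrite /joinable ohead_word_inv olast_word_inv.
by case: (olast a) => [x|]; case: (ohead b) => [y|] //=; rewrite nocancel_inv nocancelC.
Qed.

Lemma reduced_word_inv a : reduced a -> reduced (word_inv a).
Proof.
rewrite /reduced /word_inv rev_sorted sorted_map.
have e : (fun z x => relpre letter_inv nocancel x z) =2 nocancel.
  by move=> x y; rewrite /relpre /= nocancel_inv nocancelC.
by case: a => [|x a] //=; rewrite (eq_path e).
Qed.

Lemma word_expS c n : word_exp c n.+1 = c ++ word_exp c n.
Proof. by []. Qed.

Lemma ohead_word_exp c n : ohead (word_exp c n.+1) = ohead c.
Proof. by rewrite word_expS ohead_cat; case: c => [|x c] //; elim: n. Qed.

Lemma olast_word_exp c n : olast (word_exp c n.+1) = olast c.
Proof.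
elim: n => [|n IH]; first by rewrite word_expS cats0.
by rewrite word_expS olast_cat; move: IH; case: (word_exp c n.+1) => //; case: c.
Qed.

Lemma size_word_exp c n : size (word_exp c n) = (size c * n)%N.
Proof. by elim: n => [|n IH]; rewrite ?muln0 // word_expS size_cat IH mulnS. Qed.

Lemma leq_size_word_exp c n : c != [::] -> (n <= size (word_exp c n))%N.
Proof. by rewrite size_word_exp -size_eq0 -lt0n => /leq_pmull. Qed.

Lemma joinable_word_exp_l c n a : joinable (word_exp c n.+1) a = joinable c a.
Proof. by rewrite /joinable olast_word_exp. Qed.

Lemma joinable_word_exp_r c n a : joinable a (word_exp c n.+1) = joinable a c.
Proof. by rewrite /joinable ohead_word_exp. Qed.

Lemma reduced_word_exp c n : cyclically_reduced c -> reduced (word_exp c n).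
Proof.
case/andP=> hc cc; elim: n => [|[|n] IH] //; first by rewrite word_expS cats0.
by rewrite word_expS reduced_cat hc IH joinable_word_exp_r cc.
Qed.

Lemma cyclically_reduced_word_inv c :
  cyclically_reduced c -> cyclically_reduced (word_inv c).
Proof.
by case/andP=> hc cc; rewrite /cyclically_reduced reduced_word_inv ?joinable_word_inv.
Qed.

Lemma reduced_conj_decomposition a : reduced a -> a != [::] ->
  exists u c, [/\ a = u ++ c ++ word_inv u, c != [::] & cyclically_reduced c].
Proof.
elim: {a}(size a).+1 {-2}a (ltnSn (size a)) => // n IH [|x a] //= ha hred _.
case/lastP: a ha hred => [|m y] ha hred.
  by exists [::], [:: x]; rewrite /cyclically_reduced /joinable /= nocancelxx.
have [hyx | hyx] := boolP (nocancel y x).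
  exists [::], (x :: rcons m y); split; rewrite ?cats0 //.
  by apply/andP; split; rewrite // /joinable olast_cons last_rcons.
have ey : y = letter_inv x.
  move: hyx; rewrite /nocancel negbK => /andP[/eqP h1 h2].
  by case: x y {ha hred} h1 h2 => i [] [j []] //= ->.
have [hm jm] : reduced m /\ m != [::].
  have : reduced ([:: x] ++ m ++ [:: y]) by rewrite cats1.
  rewrite !reduced_cat => /and3P[_ jxm /and3P[hm _ _]].
  split=> //; apply: contraNneq hyx => m0; move: jxm.
  by rewrite m0 /joinable /= nocancelC.
have lt_m : (size m < n)%N by move: ha; rewrite size_rcons; lia.
have [u [c [-> c0 cc]]] := IH m lt_m hm jm.
exists (x :: u), c; split => //.
by rewrite word_inv_cons ey -cats1 /= !catA.
Qed.

Lemma reduced_conj_exp_letter u c : (1 < k)%N ->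
  reduced (u ++ c ++ word_inv u) -> c != [::] -> cyclically_reduced c ->
  exists e : letter k, forall n,
    reduced (u ++ word_exp c n.+1 ++ [:: e] ++ word_exp (word_inv c) n.+1 ++ word_inv u).
Proof.
move=> k1 hw c0 cc.
move: hw; rewrite reduced_cat joinable_catr // => /and3P[hu juc].
rewrite reduced_cat => /and3P[_ _ hu'].
have [x hx] : exists x, olast c = Some x.
  by case: c c0 {cc juc} => // y c _; exists (last y c); rewrite olast_cons.
pose i0 : 'I_k := Ordinal (ltn_trans (ltnSn 0) k1).
pose e : letter k := (if x.1 == i0 then Ordinal k1 else i0, true).
have hne : e.1 != x.1.
  rewrite /e /=; case: ifP => [/eqP -> | /negbT h]; last by rewrite eq_sym.
  by apply/eqP => /(congr1 val).
exists e => n.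
have ne d : d != [::] -> word_exp d n.+1 != [::] by case: d.
rewrite (reduced_cat u) (reduced_cat (word_exp c n.+1)) (reduced_cat [:: e]).
rewrite (reduced_cat (word_exp (word_inv c) n.+1)) hu hu' /=.
rewrite !reduced_word_exp ?cyclically_reduced_word_inv // andbT.
rewrite !joinable_catr ?ne ?word_inv_eq0 //.
rewrite !joinable_word_exp_l joinable_word_inv juc /joinable hx /= ohead_word_inv hx /=.
by rewrite /nocancel /= (negPf hne) eq_sym (negPf hne).
Qed.

End Words.

Section Rep.
Variables (R : fieldType) (k : nat) (g : 'I_k -> 'M[R]_3).
Hypothesis detg : forall i, \det (g i) = 1.

Lemma rep_nil : rep g [::] = 1%:M.
Proof. by rewrite /rep big_nil. Qed.

Lemma rep_cat a b : rep g (a ++ b) = rep g a *m rep g b.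
Proof. by rewrite /rep big_cat mulmxE. Qed.

Lemma rep_cons x a : rep g (x :: a) = letter_mx g x *m rep g a.
Proof. by rewrite /rep big_cons mulmxE. Qed.

Lemma rep_word_exp c n : rep g (word_exp c n) = rep g c ^+ n.
Proof.
elim: n => [|n IH]; first by rewrite expr0 rep_nil.
by rewrite word_expS rep_cat IH exprS mulmxE.
Qed.

Lemma letter_mx_inv x : letter_mx g x *m letter_mx g (letter_inv x) = 1%:M.
Proof.
have gU i : g i \in unitmx by rewrite unitmxE detg unitr1.
by case: x => i [] /=; rewrite /letter_mx /= ?mulmxV ?mulVmx.
Qed.

Lemma rep_word_invr a : rep g a *m rep g (word_inv a) = 1%:M.
Proof.
elim: a => [|x a IH]; first by rewrite rep_nil mulmx1.
rewrite word_inv_cons rep_cat rep_cons (rep_cons _ [::]) rep_nil mulmx1.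
by rewrite mulmxA -(mulmxA _ (rep g a)) IH mulmx1 letter_mx_inv.
Qed.

Lemma rep_word_invl a : rep g (word_inv a) *m rep g a = 1%:M.
Proof. exact: mulmx1C (rep_word_invr a). Qed.

Lemma det_rep a : \det (rep g a) = 1.
Proof.
elim: a => [|x a IH]; first by rewrite rep_nil det1.
rewrite rep_cons det_mulmx IH mulr1 /letter_mx.
by case: (x.2); rewrite ?det_inv detg ?invr1.
Qed.

End Rep.

Lemma mxnorm_le (R : realFieldType) (A : 'M[R]_3) c :
  0 <= c -> mx_bounded A c -> mxnorm A <= c.
Proof.
move=> c0 h; rewrite /mxnorm.
have hmax x y : x <= c -> y <= c -> Num.max x y <= c by rewrite ge_max => -> ->.
apply: (big_ind (fun x => x <= c)) => // i _.
exact: (big_ind (fun x => x <= c)).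
Qed.

Lemma ln_le_linear (R : realType) (eps x : R) :
  0 < eps -> 0 < x -> ln x <= eps * x - 1 - ln eps.
Proof.
move=> eps0 x0; have ex0 : 0 < eps * x by rewrite mulr_gt0.
have : ln (1 + (eps * x - 1)) <= eps * x - 1 by apply: le_ln1Dx; lra.
by rewrite addrC subrK lnM ?posrE //; lra.
Qed.

Lemma ln_mxnorm_poly_bounded (R : realType) (f : nat -> 'M[R]_3) :
  poly_bounded f -> exists (C : R) (d : nat),
    forall t, ln (mxnorm (f t)) <= C + d%:R * ln t.+1%:R.
Proof.
move=> [C [d [C0 hC]]]; exists (ln (C + 1)), d => t.
have t1 : 1 <= t.+1%:R ^+ d :> R by rewrite exprn_ege1 // ler1n.
have hb : mxnorm (f t) <= (C + 1) * t.+1%:R ^+ d.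
  apply: mxnorm_le; first by rewrite mulr_ge0 ?exprn_ge0 //; lra.
  by apply: (mx_bounded_le (hC t)); rewrite ler_wpM2r ?exprn_ge0 //; lra.
have C1 : 0 < C + 1 by lra.
have <- : ln ((C + 1) * t.+1%:R ^+ d) = ln (C + 1) + d%:R * ln t.+1%:R.
  by rewrite lnM ?posrE ?exprn_gt0 ?ltr0n // lnXn ?ltr0n // mulr_natl.
have [hm|hm] := lerP (mxnorm (f t)) 0; last by rewrite ler_ln ?posrE //; lra.
by rewrite ln0 // ln_ge0 // mulr_ege1 //; lra.
Qed.

(* With [eps = (2 a (d + 1))^-1], [ln_le_linear] bounds the right-hand side by
   [t / (2 a)] plus a constant. *)
Lemma log_not_linear_lower (R : realType) (C a b : R) (d : nat) : 0 < a ->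
  ~ (forall t : nat, t%:R / a - b <= C + d%:R * ln t.+1%:R).
Proof.
move=> a0 hq.
set eps := (2 * a * d.+1%:R)^-1.
have eps0 : 0 < eps by rewrite invr_gt0 !mulr_gt0 // ltr0n.
have hK : d%:R * eps <= (2 * a)^-1.
  have -> : d%:R * eps = (2 * a)^-1 * (d%:R / d.+1%:R).
    by rewrite /eps -natr1; field; rewrite addrC natr1 pnatr_eq0 (gt_eqF a0).
  have hd : d%:R / d.+1%:R <= 1 :> R by rewrite ler_pdivrMr ?ltr0n // mul1r ler_nat.
  by rewrite ler_piMr // invr_ge0 mulr_ge0 // ltW.
set K := C + d%:R * (eps - 1 - ln eps) + b.
have [n hn] : exists n : nat, 2 * a * (`|K| + 1) < n%:R.
  exists (Num.Def.archi_bound (2 * a * (`|K| + 1))).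
  by apply: archi_boundP; rewrite !mulr_ge0 ?addr_ge0 // ltW.
have hln : d%:R * ln n.+1%:R <= d%:R * (eps * n.+1%:R - 1 - ln eps).
  by rewrite ler_wpM2l ?ler0n // ln_le_linear ?ltr0n.
have hn' : (d%:R * eps) * n%:R <= (2 * a)^-1 * n%:R by rewrite ler_wpM2r ?ler0n.
have ha : n%:R / a = 2 * ((2 * a)^-1 * n%:R) by field; rewrite gt_eqF.
have hc : `|K| + 1 < (2 * a)^-1 * n%:R.
  by rewrite mulrC ltr_pdivlMr ?mulr_gt0 // mulrC.
have := hq n; have := ler_norm K; rewrite -natr1 in hln *.
rewrite ha /K; nra.
Qed.

Lemma restriction_inv (R : comUnitRingType) (B : 'M[R]_(3, 2)) (G Gi : 'M[R]_3)
    (A A' : 'M[R]_2) :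
  G *m B = B *m A -> Gi *m G = 1%:M -> A *m A' = 1%:M -> Gi *m B = B *m A'.
Proof.
move=> GB GiG AA'.
by rewrite -[B in LHS]mulmx1 -AA' (mulmxA B) -GB !mulmxA GiG mul1mx.
Qed.

Section RepConj.
Variables (R : fieldType) (k : nat) (g : 'I_k -> 'M[R]_3).
Hypothesis detg : forall i, \det (g i) = 1.

Lemma rep_conj_cat u a b :
  rep g (u ++ a ++ word_inv u) *m rep g (u ++ b ++ word_inv u) =
  rep g (u ++ (a ++ b) ++ word_inv u).
Proof.
rewrite !rep_cat !mulmxA -[_ *m rep g (word_inv u) *m rep g u]mulmxA.
by rewrite rep_word_invl // mulmx1.
Qed.

Lemma rep_conj_exp u a n :
  rep g (u ++ a ++ word_inv u) ^+ n = rep g (u ++ word_exp a n ++ word_inv u).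
Proof.
rewrite !rep_cat mulmxA conjmx_exp ?rep_word_invl // rep_word_exp.
by rewrite -mulmxA.
Qed.

Lemma rep_conj_invl u a :
  rep g (u ++ word_inv a ++ word_inv u) *m rep g (u ++ a ++ word_inv u) = 1%:M.
Proof. by rewrite rep_conj_cat // !rep_cat rep_word_invl // mul1mx rep_word_invr. Qed.

End RepConj.

Lemma contracting_square_not_qi (R : realType) (k : nat) (g : 'I_k -> 'M[R]_3)
    (B : 'M[R]_(3, 2)) (a b : R) (u c : word k) (s : R) (N : 'M[R]_2) :
  (1 < k)%N -> (forall i, \det (g i) = 1) -> \rank B = 2%N ->
  (forall w : word k, reduced w -> exists M : 'M[R]_2, rep g w *m B = B *m M) ->
  0 < a -> (forall w : word k, reduced w -> a^-1 * (wlen w)%:R - b <= ln (mxnorm (rep g w))) ->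
  reduced (u ++ c ++ word_inv u) -> c != [::] -> cyclically_reduced c ->
  rep g (u ++ c ++ word_inv u) ^+ 2 *m B = B *m (s *: N) -> 0 < s -> s <= 1 ->
  \det N = 1 -> `|\tr N| <= 2 -> False.
Proof.
move=> k1 detg rkB hinv a0 hqi hw c0 cc hG s0 s1 detN trN.
have [e he] := reduced_conj_exp_letter k1 hw c0 cc.
set G := rep g (u ++ c ++ word_inv u) ^+ 2.
set Gi := rep g (u ++ word_inv c ++ word_inv u) ^+ 2.
set H := rep g (u ++ [:: e] ++ word_inv u).
have GiG : Gi *m G = 1%:M by rewrite mulmx1_exp // rep_conj_invl.
have [X HB] : exists X, H *m B = B *m X.
  have hu : reduced u by move: hw; rewrite reduced_cat => /andP[].
  have [Mu hMu] := hinv u hu.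
  have [Me hMe] := hinv [:: e] (erefl true).
  have [Mi hMi] := hinv _ (reduced_word_inv hu).
  exists (Mu *m Me *m Mi).
  by rewrite /H !rep_cat -!mulmxA hMi (mulmxA _ B) hMe -mulmxA (mulmxA _ B) hMu !mulmxA.
have detG : \det G = 1 by rewrite /G rep_conj_exp // det_rep.
have := contracting_conj_poly_bounded rkB GiG detG hG HB s0 s1 detN trN.
move/poly_bounded_shift/ln_mxnorm_poly_bounded => [C [d hCd]].
apply: (@log_not_linear_lower _ C a b d a0) => t.
pose W := u ++ word_exp c (2 * t).+2 ++ [:: e] ++
  word_exp (word_inv c) (2 * t).+2 ++ word_inv u.
have lenW : (t <= wlen W)%N.
  rewrite /wlen /W size_cat (size_cat (word_exp c _)) addnCA.
  apply: leq_trans (leq_addr _ _); apply: leq_trans (leq_size_word_exp _ c0).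
  lia.
have repW : G ^+ t.+1 *m H *m Gi ^+ t.+1 = rep g W.
  rewrite /G /Gi /H -!exprM (_ : (2 * t.+1)%N = (2 * t).+2); last by lia.
  rewrite !rep_conj_exp // !rep_conj_cat //.
  by rewrite -(catA (_ ++ [:: e])) -(catA (word_exp c _)).
apply: le_trans (hCd t); rewrite repW; apply: le_trans (hqi _ (he _)).
by rewrite lerD2r mulrC ler_wpM2l ?invr_ge0 ?ler_nat //; lra.
Qed.

Lemma nonhyperbolic_square (R : realFieldType) (M : 'M[R]_2) :
  \det M != 0 -> (\tr M) ^+ 2 * ((\tr M) ^+ 2 - 4 * \det M) <= 0 ->
  exists (s : R) (N : 'M[R]_2),
    [/\ 0 < s, M *m M = s *: N, \det N = 1 & `|\tr N| <= 2].
Proof.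
set t := \tr M; set d := \det M => d0 hdisc.
have s0 : 0 < `|d| by rewrite normr_gt0.
have ss : `|d| ^+ 2 = d ^+ 2 by rewrite real_normK ?num_real.
exists `|d|, (`|d|^-1 *: (M *m M)); split => //.
- by rewrite scalerA mulfV ?gt_eqF // scale1r.
- by rewrite detZ det_mulmx -expr2 -ss exprVn mulVf // expf_neq0 // gt_eqF.
set tau := \tr _.
have etau : tau = `|d|^-1 * (t ^+ 2 - 2 * d).
  rewrite /tau mxtraceZ Cayley_Hamilton_mx2 raddfB /= !mxtraceZ mxtrace1 -/t -/d.
  by congr (_ * _); ring.
have d2 : 0 < d ^+ 2 by rewrite exprn_even_gt0 ?d0 ?orbT.
have htau2 : tau ^+ 2 <= 4.
  rewrite etau exprMn exprVn ss mulrC ler_pdivrMr //.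
  have : (t ^+ 2 - 2 * d) ^+ 2 - 4 * d ^+ 2 = t ^+ 2 * (t ^+ 2 - 4 * d) by ring.
  lra.
by rewrite ler_norml; apply/andP; split; nra.
Qed.

Theorem mainTheorem14 (R : realType) (k : nat) (g : 'I_k -> 'M[R]_3)
  (B : 'M[R]_(3, 2)) :
  (2 <= k)%N ->
  (forall i, \det (g i) = 1) ->
  \rank B = 2%N ->
  (forall w : word k, reduced w ->
     exists M : 'M[R]_2, rep g w *m B = B *m M) ->
  (exists a b : R, 1 <= a /\ 0 <= b /\
     forall w : word k, reduced w ->
       a^-1 * (wlen w)%:R - b <= ln (mxnorm (rep g w))) ->
  forall w : word k, reduced w -> w != [::] ->
  forall M : 'M[R]_2, rep g w *m B = B *m M ->
    hyperbolic (normalize_P M).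
Proof.
move=> k1 detg rkB hinv [a [b [a1 [_ hqi]]]] w hw w0 M hM.
have d0 := det_restriction_neq0 rkB hM (det_rep detg w).
have [hpos|hneg] := ltrP 0 ((\tr M) ^+ 2 * ((\tr M) ^+ 2 - 4 * \det M)).
  exact: normalize_P_hyperbolic.
exfalso; have [s [N [s0 hMM detN trN]]] := nonhyperbolic_square d0 hneg.
have [u [c [ew c0 cc]]] := reduced_conj_decomposition hw w0.
have a0 : 0 < a by lra.
have hG : rep g w ^+ 2 *m B = B *m (s *: N).
  by rewrite -hMM expr2 -mulmxE -mulmxA hM !mulmxA hM.
rewrite ew in hw hG; have [s1|s1] := lerP s 1.
  exact: (contracting_square_not_qi k1 detg rkB hinv a0 hqi hw c0 cc hG s0 s1 detN trN).
apply: (contracting_square_not_qi k1 detg rkB hinv a0 hqi (u := u) (c := word_inv c)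
  (s := s^-1) (N := \adj N)) => //.
- by move: (reduced_word_inv hw); rewrite !word_inv_cat word_invK catA.
- by rewrite word_inv_eq0.
- exact: cyclically_reduced_word_inv.
- apply: restriction_inv hG _ _; first by rewrite mulmx1_exp // rep_conj_invl.
  by rewrite -scalemxAl -scalemxAr scalerA mulfV ?gt_eqF // scale1r mulmx_adj_unimodular.
- by rewrite invr_gt0.
- by rewrite invf_le1 // ltW.
- exact: det_adj_mx2.
- by rewrite mxtrace_adj_mx2.
Qed.
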